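(* Let $G$ be a finite simple graph that is $\mathcal{MC}$-edge connected and satisfies $\mathrm{ann}\,G=0$, and let $\mathcal{N}G$ be its normal graph algebra over a field $\mathbb{F}$ of characteristic not $2$. If $g$ is an edge-scaling automorphism of $\mathcal{N}G$, then $g$ is a scalar automorphism.
   Context: For a finite simple graph $G$ with vertex set $VG$ and edge set $EG$, $\mathcal{N}G=U_G\oplus\mathfrak{Z}_G$ with $U_G$ having basis $VG$ and $\mathfrak{Z}_G$ basis $EG$ (edge with endpoints $x,y$ written $[x,y]$), commutative bilinear product determined by: for distinct vertices $x,y$, $xy=[x,y]$ if adjacent and $0$ otherwise; $x^2=\sum_{y\sim x}[x,y]$; products involving $\mathfrak{Z}_G$ are $0$. $\mathrm{ann}\,G=\{u\in U_G:uU_G=0\}$. An automorphism of $\mathcal{N}G$ is a product-preserving linear bijection $g$ of $\mathcal{N}G$ with $g(U_G)=U_G$ and $g(\mathfrak{Z}_G)=\mathfrak{Z}_G$. It is edge-scaling if $g(\mathfrak{e})\in\langle\mathfrak{e}\rangle$ for every edge $\mathfrak{e}$, and scalar if there is $\alpha\in\mathbb{F}$, $\alpha\neq0$, with $g(u)=\alpha u$ for $u\in U_G$ and $g(\mathfrak{z})=\alpha^2\mathfrak{z}$ for $\mathfrak{z}\in\mathfrak{Z}_G$. A set of distinct edges $\mathfrak{e}_1,\dots,\mathfrak{e}_n$ is coherent if there are scalars $\alpha_i$, not all $0$, such that at each vertex the sum of the $\alpha_i$ over incident $\mathfrak{e}_i$ is $0$; a graph is minimally coherent if its edge set is coherent but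 no proper subset is. $G$ is $\mathcal{MC}$-edge connected if for any two edges $\mathfrak{e},\mathfrak{f}$ there is a sequence $G_1,\dots,G_m$ of minimally coherent subgraphs of $G$ with $\mathfrak{e}\in EG_1$, $\mathfrak{f}\in EG_m$, and $EG_i\cap EG_{i+1}\neq\emptyset$ for $1\le i\le m-1$. *)

From HB Require Import structures.
From mathcomp Require Import all_boot all_order all_algebra.
Set Implicit Arguments. Unset Strict Implicit. Unset Printing Implicit Defensive.
Import Order.TTheory GRing.Theory Num.Theory.
Local Open Scope ring_scope.

Section NormalGraphAlgebra.
Variables (F : fieldType) (T : finType) (adj : rel T).

Definition is_edge (E : {set T}) : bool :=
  [exists x, [exists y, adj x y && (E == [set x; y])]].

Definition edge := {E : {set T} | is_edge E}.

(* U_G = F^VG (coordinates on the vertex basis), Z_G = F^EG. *)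
Definition NG := ({ffun T -> F} * {ffun edge -> F})%type.

Definition addN (p q : NG) : NG :=
  ([ffun x => p.1 x + q.1 x], [ffun E => p.2 E + q.2 E]).
Definition scaleN (a : F) (p : NG) : NG :=
  ([ffun x => a * p.1 x], [ffun E => a * p.2 E]).

(* product of basis vertices x, y as an element of Z_G:
   x^2 = sum of edges at x; xy = [x,y] if adjacent, 0 otherwise. *)
Definition basis_prod (x y : T) (E : edge) : F :=
  if x == y then (x \in val E)%:R else (val E == [set x; y])%:R.

Definition mulU (u v : {ffun T -> F}) : {ffun edge -> F} :=
  [ffun E => \sum_(x : T) \sum_(y : T) u x * v y * basis_prod x y E].

Definition mulN (p q : NG) : NG := ([ffun => 0], mulU p.1 q.1).

Definition inU (p : NG) : Prop := p.2 = [ffun => 0].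
Definition inZ (p : NG) : Prop := p.1 = [ffun => 0].

Definition vertU (u : {ffun T -> F}) : NG := (u, [ffun => 0]).
Definition edgZ (z : {ffun edge -> F}) : NG := ([ffun => 0], z).
Definition edge_vec (E : edge) : NG := edgZ [ffun E' => (E' == E)%:R].

Definition linearN (g : NG -> NG) : Prop :=
  forall a p q, g (addN (scaleN a p) q) = addN (scaleN a (g p)) (g q).

Definition automorphismN (g : NG -> NG) : Prop :=
  [/\ linearN g, bijective g,
      (forall p q, g (mulN p q) = mulN (g p) (g q)),
      (forall p, inU p -> inU (g p)) /\ (forall q, inU q -> exists2 p, inU p & g p = q) &
      (forall p, inZ p -> inZ (g p)) /\ (forall q, inZ q -> exists2 p, inZ p & g p = q)].

Definition edge_scaling (g : NG -> NG) : Prop :=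
  forall E : edge, exists c : F, g (edge_vec E) = scaleN c (edge_vec E).

Definition scalar_aut (g : NG -> NG) : Prop :=
  exists2 alpha : F, alpha != 0 &
    (forall u, g (vertU u) = scaleN alpha (vertU u)) /\
    (forall z, g (edgZ z) = scaleN (alpha ^+ 2) (edgZ z)).

Definition ann_zero : Prop :=
  forall u : {ffun T -> F}, (forall v, mulU u v = [ffun => 0]) -> u = [ffun => 0].

(* coherence of a set of edges (subgraph given by its edge set) *)
Definition coherent (S : {set edge}) : Prop :=
  exists alpha : edge -> F, (exists2 E, E \in S & alpha E != 0) /\
    forall x : T, \sum_(E in S | x \in val E) alpha E = 0.

Definition minimally_coherent (S : {set edge}) : Prop :=
  coherent S /\ forall S' : {set edge}, S' \proper S -> ~ coherent S'.

Definition MC_edge_connected : Prop :=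
  forall E1 E2 : edge, exists (m : nat) (Gs : nat -> {set edge}),
    [/\ (0 < m)%N, (forall i, (i < m)%N -> minimally_coherent (Gs i)),
        E1 \in Gs 0%N, E2 \in Gs m.-1 &
        forall i, (i.+1 < m)%N -> Gs i :&: Gs i.+1 != set0].

End NormalGraphAlgebra.

From HB Require Import structures.
From mathcomp Require Import all_boot all_order all_algebra.
Import GRing.Theory.
Set Implicit Arguments. Unset Strict Implicit. Unset Printing Implicit Defensive.
Local Open Scope ring_scope.

(* For an edge E let s_E(u) be the sum of the coordinates of u in U_G at the
   ends of E; the E-coordinate of a product uv is s_E(u) s_E(v).  If g scales
   each edge E by c_E and acts on U_G by A, comparing E-coordinates in
   g(uv) = g(u) g(v) gives s_E o A = l_E s_E with l_E^2 = c_E.  A family (a_E)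
   is balanced at every vertex exactly when sum_E a_E s_E = 0, so composing
   with A shows that (a_E l_E) is balanced whenever (a_E) is.  On a minimally
   coherent S a balanced family vanishing somewhere vanishes everywhere, which
   forces l to be constant on S, hence constant by MC-edge connectivity.  Then
   s_E(Au - l u) = 0 for all E, i.e. Au - l u lies in ann G = 0, and c_E = l^2. *)

Section NGCalculus.
Variables (F : fieldType) (T : finType) (adj : rel T).
Implicit Types (p q : NG F adj) (a b : F) (u : {ffun T -> F}) (z : {ffun edge adj -> F}).

Lemma scaleN1 p : scaleN 1 p = p.
Proof. by case: p => u z; congr pair; apply/ffunP => x; rewrite ffunE mul1r. Qed.

Lemma scaleNA a b p : scaleN a (scaleN b p) = scaleN (a * b) p.
Proof. by congr pair; apply/ffunP => x; rewrite !ffunE mulrA. Qed.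

Lemma vertU_scale a u : vertU adj [ffun x => a * u x] = scaleN a (vertU adj u).
Proof. by congr pair; apply/ffunP => x; rewrite !ffunE ?mulr0. Qed.

Lemma edgZ_scale a z : edgZ [ffun E => a * z E] = scaleN a (edgZ z).
Proof. by congr pair; apply/ffunP => x; rewrite !ffunE ?mulr0. Qed.

Lemma edgZ_sum_edge_vec z :
  edgZ z = \sum_E scaleN (z E) (edge_vec F E).
Proof.
rewrite [RHS]surjective_pairing (big_morph fst (id1 := 0) (op1 := +%R)) //.
rewrite (big_morph snd (id1 := 0) (op1 := +%R)) //.
congr pair; apply/ffunP => i; rewrite sum_ffunE ?ffunE.
  by rewrite big1 // => E _; rewrite /= !ffunE mulr0.
rewrite (bigD1 i) //= big1 => [|E nEi]; rewrite /= !ffunE ?eqxx ?mulr1 ?addr0 //.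
by rewrite eq_sym (negbTE nEi) mulr0.
Qed.

End NGCalculus.

Section EdgeSums.
Variables (F : fieldType) (T : finType) (adj : rel T).
Local Notation edge := (edge adj).
Implicit Types (E : edge) (u v : {ffun T -> F}).

Definition edge_sum E u : F := \sum_(x in val E) u x.

Definition vertex_vec (x : T) : {ffun T -> F} := [ffun y => (y == x)%:R].

Lemma edge_sum_vertex_vec E x : edge_sum E (vertex_vec x) = (x \in val E)%:R.
Proof.
rewrite /edge_sum big_mkcond (bigD1 x) //= big1 => [|y nyx]; rewrite ffunE.
  by rewrite eqxx; case: (x \in val E); rewrite addr0.
by rewrite (negbTE nyx) if_same.
Qed.

Lemma edge_sumB E u v : edge_sum E (u - v) = edge_sum E u - edge_sum E v.
Proof. by rewrite /edge_sum -sumrB; apply: eq_bigr => x _; rewrite !ffunE. Qed.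

Lemma edge_sumZ E a u : edge_sum E [ffun x => a * u x] = a * edge_sum E u.
Proof. by rewrite /edge_sum mulr_sumr; apply: eq_bigr => x _; rewrite ffunE. Qed.

Lemma edge_has_vertex E : exists x, x \in val E.
Proof.
case: E => E /= /existsP[x /existsP[y /andP[_ /eqP ->]]].
by exists x; rewrite !inE eqxx.
Qed.

Definition edge_vertex E : T := xchoose (edge_has_vertex E).

Lemma edge_vertexP E : edge_vertex E \in val E.
Proof. exact: xchooseP. Qed.

Lemma set2_eq (a b x y : T) :
  x != y -> ([set a; b] == [set x; y]) = (x \in [set a; b]) && (y \in [set a; b]).
Proof.
move=> nxy; apply/eqP/andP => [->|[]]; first by rewrite !inE !eqxx orbT.
rewrite !inE => /orP[]/eqP ex /orP[]/eqP ey; subst x y; rewrite ?eqxx // in nxy.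
exact: setUC.
Qed.

Lemma basis_prodE E x y :
  basis_prod F x y E = ((x \in val E) && (y \in val E))%:R.
Proof.
rewrite /basis_prod; case: eqP => [<-|/eqP nxy]; first by rewrite andbb.
case: E => /= E /existsP[a /existsP[b /andP[_ /eqP ->]]].
by rewrite set2_eq.
Qed.

Lemma mulU_edge_sum u v E : mulU adj u v E = edge_sum E u * edge_sum E v.
Proof.
rewrite ffunE /edge_sum !(big_mkcond (fun y => y \in val E)) big_distrlr /=.
apply: eq_bigr => x _; apply: eq_bigr => y _; rewrite basis_prodE.
by case: (x \in val E); case: (y \in val E); rewrite ?mulr0 ?mul0r ?mulr1.
Qed.

Lemma ann_zero_edge_sum u :
  ann_zero F adj -> (forall E, edge_sum E u = 0) -> u = 0.
Proof.
move=> hann hu; apply: hann => v; apply/ffunP => E.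
by rewrite mulU_edge_sum hu mul0r ffunE.
Qed.

End EdgeSums.

Section Coherence.
Variables (F : fieldType) (T : finType) (adj : rel T).
Local Notation edge := (edge adj).
Implicit Types (S : {set edge}) (b lam : edge -> F).

Definition balanced_on S b : Prop :=
  forall x : T, \sum_(E in S | x \in val E) b E = 0.

Lemma sum_edge_sum_exchange S b (u : {ffun T -> F}) :
  \sum_(E in S) b E * edge_sum E u = \sum_x u x * \sum_(E in S | x \in val E) b E.
Proof.
transitivity (\sum_(E in S) \sum_x (if x \in val E then b E * u x else 0)).
  by apply: eq_bigr => E _; rewrite mulr_sumr big_mkcond.
rewrite exchange_big; apply: eq_bigr => x _.
rewrite mulr_sumr big_mkcond [RHS]big_mkcond; apply: eq_bigr => E _.
by case: (E \in S); case: (x \in val E); rewrite //= mulrC.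
Qed.

Lemma balanced_on_edge_sum S b :
  balanced_on S b <-> forall u, \sum_(E in S) b E * edge_sum E u = 0.
Proof.
split=> [hb u | hb x].
  by rewrite sum_edge_sum_exchange big1 // => x _; rewrite hb mulr0.
rewrite -[RHS](hb (vertex_vec F x)) big_mkcond [RHS]big_mkcond; apply: eq_bigr => E _.
rewrite edge_sum_vertex_vec.
by case: (E \in S); case: (x \in val E); rewrite /= ?mulr1 ?mulr0.
Qed.

Lemma minimally_coherent_support S b :
  minimally_coherent F S -> balanced_on S b ->
  (exists2 E, E \in S & b E != 0) -> {in S, forall E, b E != 0}.
Proof.
move=> [_ hmin] hb [E1 SE1 bE1] E SE.
set S' := [set E in S | b E != 0].
have sub : S' \subset S by apply/subsetP => e; rewrite inE => /andP[].
have coh : coherent F S'.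
  exists b; split; first by exists E1; rewrite // inE SE1.
  move=> x; rewrite -[RHS](hb x) big_mkcond [RHS]big_mkcond /=.
  apply: eq_bigr => e _; rewrite inE.
  by case: (e \in S); case: (x \in val e); case: eqP => //= ->.
apply/negP => bE0; apply: (hmin S' _ coh).
rewrite properEneq sub andbT; apply/eqP => eqS'.
by move: SE; rewrite -eqS' inE bE0 andbF.
Qed.

Lemma minimally_coherent_const S lam :
  minimally_coherent F S ->
  (forall b, balanced_on S b -> balanced_on S (fun E => b E * lam E)) ->
  {in S &, forall E0 E, lam E0 = lam E}.
Proof.
move=> hS hlam E0 E SE0 SE; have [[al [al_supp hal]] _] := hS.
have al_neq0 := minimally_coherent_support hS hal al_supp.
apply/eqP; apply: contraT => neq.
pose b E' := al E' * (lam E' - lam E0).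
have hb : balanced_on S b.
  move=> x; rewrite /b; under eq_bigr do rewrite mulrBr.
  by rewrite sumrB hlam // -mulr_suml hal mul0r subrr.
have bE : b E != 0 by rewrite mulf_neq0 ?al_neq0 // subr_eq0 eq_sym.
have := minimally_coherent_support hS hb (ex_intro2 _ _ E SE bE) SE0.
by rewrite /b subrr mulr0 eqxx.
Qed.

Lemma MC_edge_connected_const lam :
  MC_edge_connected F adj ->
  (forall S, minimally_coherent F S -> {in S &, forall E0 E, lam E0 = lam E}) ->
  forall E0 E, lam E0 = lam E.
Proof.
move=> hMC hconst E0 E; have [m [Gs [m_gt0 hGs GE0 GE hlink]]] := hMC E0 E.
suff chain i : (i < m)%N -> {in Gs i, forall E', lam E0 = lam E'}.
  by apply: (chain m.-1); rewrite ?ltn_predL.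
elim: i => [|i IH] lt_im E' GE'; first exact: hconst _ (hGs 0%N lt_im) _ _ GE0 GE'.
have /set0Pn[E1 /setIP[GiE1 GSiE1]] := hlink i lt_im.
by rewrite (IH (ltnW lt_im) E1 GiE1); apply: hconst (hGs _ lt_im) _ _ GSiE1 GE'.
Qed.

End Coherence.

Lemma proportional_of_mul_eq (F : fieldType) (V : Type) (s t : V -> F) (c : F) (u0 : V) :
  c != 0 -> s u0 = 1 -> (forall u v, t u * t v = c * (s u * s v)) ->
  t u0 ^+ 2 = c /\ forall u, t u = t u0 * s u.
Proof.
move=> c_neq0 su0 hst; have sqr : t u0 ^+ 2 = c by rewrite expr2 hst su0 !mulr1.
have tu0_neq0 : t u0 != 0 by apply: contraNneq c_neq0; rewrite -sqr => ->; rewrite expr0n.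
split=> // u; apply: (mulIf tu0_neq0).
by rewrite hst su0 mulr1 -sqr expr2 mulrAC.
Qed.

Section EdgeScalingAutomorphism.
Variables (F : fieldType) (T : finType) (adj : rel T).
Local Notation edge := (edge adj).
Variable g : NG F adj -> NG F adj.
Hypotheses (hg : automorphismN g) (hes : edge_scaling g).
Implicit Types (E : edge) (p q : NG F adj) (u v : {ffun T -> F}).

Lemma aut_linear a p q : g (scaleN a p + q) = scaleN a (g p) + g q.
Proof. by case: hg => hlin _ _ _ _; apply: hlin. Qed.

Lemma aut_add p q : g (p + q) = g p + g q.
Proof. by have := aut_linear 1 p q; rewrite !scaleN1. Qed.

Lemma aut0 : g 0 = 0.
Proof. by apply: (addrI (g 0)); rewrite -aut_add !addr0. Qed.

Lemma aut_scale a p : g (scaleN a p) = scaleN a (g p).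
Proof. by have := aut_linear a p 0; rewrite aut0 !addr0. Qed.

Lemma aut_sum (I : Type) (r : seq I) (P : pred I) (f : I -> NG F adj) :
  g (\sum_(i <- r | P i) f i) = \sum_(i <- r | P i) g (f i).
Proof. exact: (big_morph g aut_add aut0). Qed.

Definition edge_scale E : F := (g (edge_vec F E)).2 E.

Lemma edge_scaleP E : g (edge_vec F E) = scaleN (edge_scale E) (edge_vec F E).
Proof. by rewrite /edge_scale; have [c ->] := hes E; rewrite /= !ffunE eqxx mulr1. Qed.

Lemma edge_scale_neq0 E : edge_scale E != 0.
Proof.
case: hg => _ /bij_inj g_inj _ _ _; apply/eqP => c0.
suff /(congr1 (fun p => p.2 E))/eqP : edge_vec F E = 0.
  by rewrite /= !ffunE eqxx oner_eq0.
apply: g_inj; rewrite aut0 edge_scaleP c0.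
by congr pair; apply/ffunP => x; rewrite !ffunE mul0r.
Qed.

Lemma aut_edgZ z : g (edgZ z) = edgZ [ffun E => edge_scale E * z E].
Proof.
rewrite !edgZ_sum_edge_vec aut_sum; apply: eq_bigr => E _.
by rewrite aut_scale edge_scaleP scaleNA ffunE mulrC.
Qed.

Definition vert_image u : {ffun T -> F} := (g (vertU adj u)).1.

Lemma aut_vertU u : g (vertU adj u) = vertU adj (vert_image u).
Proof. by case: hg => _ _ _ [hU _] _; rewrite [LHS]surjective_pairing hU. Qed.

Lemma edge_sum_vert_image_mul E u v :
  edge_sum E (vert_image u) * edge_sum E (vert_image v) =
  edge_scale E * (edge_sum E u * edge_sum E v).
Proof.
case: hg => _ _ hmul _ _; have := hmul (vertU adj u) (vertU adj v).
rewrite !aut_vertU /mulN /= -/(edgZ _) aut_edgZ => /(congr1 (fun p => p.2 E)) /=.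
by rewrite ffunE !mulU_edge_sum => ->.
Qed.

Definition vert_scale E : F :=
  edge_sum E (vert_image (vertex_vec F (edge_vertex E))).

Lemma vert_scaleP E :
  vert_scale E ^+ 2 = edge_scale E /\
  forall u, edge_sum E (vert_image u) = vert_scale E * edge_sum E u.
Proof.
apply: proportional_of_mul_eq (edge_scale_neq0 E) _ (edge_sum_vert_image_mul E).
by rewrite edge_sum_vertex_vec edge_vertexP.
Qed.

Lemma balanced_on_vert_scale S b :
  balanced_on S b -> balanced_on S (fun E => b E * vert_scale E).
Proof.
move=> /balanced_on_edge_sum hb; apply/balanced_on_edge_sum => u.
rewrite -[RHS](hb (vert_image u)); apply: eq_bigr => E _.
by rewrite (proj2 (vert_scaleP E)) mulrA.
Qed.

Hypothesis hMC : MC_edge_connected F adj.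

Lemma vert_scale_uniform : exists2 l : F, l != 0 & forall E, vert_scale E = l.
Proof.
have const := MC_edge_connected_const hMC
  (fun S hS => minimally_coherent_const hS (@balanced_on_vert_scale S)).
case: (pickP (@predT edge)) => [E0 _ | no_edge]; last first.
  by exists 1 => [|E]; [exact: oner_neq0 | have := no_edge E].
exists (vert_scale E0) => [|E]; last exact: const.
by have := edge_scale_neq0 E0; rewrite -(proj1 (vert_scaleP E0)) expf_eq0.
Qed.

Lemma vert_image_scale l :
  ann_zero F adj -> (forall E, vert_scale E = l) ->
  forall u, vert_image u = [ffun x => l * u x].
Proof.
move=> hann hl u; apply/subr0_eq/(ann_zero_edge_sum hann) => E.
by rewrite edge_sumB edge_sumZ (proj2 (vert_scaleP E)) hl subrr.
Qed.

End EdgeScalingAutomorphism.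

Theorem proposition9p2 (F : fieldType) (T : finType) (adj : rel T)
  (adj_irr : irreflexive adj) (adj_sym : symmetric adj)
  (char2 : (2%:R : F) != 0)
  (hMC : MC_edge_connected F adj) (hann : ann_zero F adj)
  (g : NG F adj -> NG F adj) (hg : automorphismN g) (hes : edge_scaling g) :
  scalar_aut g.
Proof.
have [l l_neq0 hl] := vert_scale_uniform hg hes hMC.
exists l => //; split => [u | z].
  by rewrite (aut_vertU hg) (vert_image_scale hg hes hann hl) vertU_scale.
rewrite (aut_edgZ hg hes) -edgZ_scale; congr edgZ; apply/ffunP => E.
by rewrite !ffunE -(proj1 (vert_scaleP hg hes E)) hl.
Qed.
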